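(* Let $S=\mathbb{Z}[x_0,\dots,x_d]$, fix a prime $p>0$, and let $f(\boldsymbol{x})=g(\boldsymbol{x})+p\,h(\boldsymbol{x})\in S$, where for some fixed integer $m<d$ one has $g(\boldsymbol{x})\in(x_0,\dots,x_m)S$ and $h(\boldsymbol{x})$ is a polynomial in $x_{m+1},\dots,x_d$ only. Set $R=S/(f(\boldsymbol{x}))$. Let $\Lambda_p$ be the ring endomorphism of $P_S=\mathbb{Z}[\boldsymbol{x},\boldsymbol{y}]$ with $\Lambda_p(x_i)=x_i^p$ and $\Lambda_p(y_i-x_i)=(y_i-x_i)^p$, and $\varphi_p(u)=(\Lambda_p(u)-u^p)/p$ for $u\in P_S$. If the local cohomology element \[ \left[\frac{\varphi_p(g(\boldsymbol{x}))}{(x_0\cdots x_m)^p}\right]\in H^{m+1}_{(x_0,\dots,x_m)}(R/pR) \] is nonzero, then so is \[ \left[\frac{\varphi_p\big(f(\boldsymbol{y})-f(\boldsymbol{x})\big)}{\prod_{i=0}^d(y_i-x_i)^p}\right]\in H^{d+1}_{\Delta_R}(P_R/pP_R). \]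
   Context: $P_R=R\otimes_{\mathbb{Z}}R$ is identified with $\mathbb{Z}[\boldsymbol{x},\boldsymbol{y}]/(f(\boldsymbol{x}),f(\boldsymbol{y}))$ ($x_i=x_i\otimes 1$, $y_i=1\otimes x_i$), and $\Delta_R$ is the ideal generated by $y_i-x_i$, $0\le i\le d$. Local cohomology classes are Čech classes of the images of the indicated numerators. *)

From HB Require Import structures.
From mathcomp Require Import all_boot all_order all_algebra.
From mathcomp Require Import mpoly.
Set Implicit Arguments. Unset Strict Implicit. Unset Printing Implicit Defensive.
Import GRing.Theory.
Local Open Scope ring_scope.

Definition in_ideal (A : comNzRingType) (l : nat) (J : 'I_l -> A) (x : A) : Prop :=
  exists r : 'I_l -> A, x = \sum_(j < l) r j * J j.

(* Vanishing of the top Cech class [u / (a_0 ... a_{n-1})^e] in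
   H^n_{(a_0,...,a_{n-1})}(A / (J)), the top cohomology of the Cech complex
   of the ring A/(J) on the images of a_0,...,a_{n-1}.  Unfolding the
   localization: the class vanishes iff for some N,
   (a_0...a_{n-1})^N u lies in (a_0^{N+e},...,a_{n-1}^{N+e}) + (J). *)
Definition top_cech_class_zero (A : comNzRingType) (l : nat) (J : 'I_l -> A)
    (n : nat) (a : 'I_n -> A) (u : A) (e : nat) : Prop :=
  exists N : nat, exists c : 'I_n -> A,
    in_ideal J ((\prod_(i < n) a i) ^+ N * u - \sum_(i < n) c i * a i ^+ (N + e)).

Definition mdivz (k : nat) (w : {mpoly int[k]}) (p : int) : {mpoly int[k]} :=
  \sum_(mo <- msupp w) ((w@_mo %/ p)%Z)%:MP * 'X_[mo].

(* S = Z[x_0..x_d] : {mpoly int[d.+1]}.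
   P_S = Z[x,y] : {mpoly int[d.+1 + d.+1]}, x_i = 'X_(lshift i), y_i = 'X_(rshift i). *)
Definition xvar (d : nat) (i : 'I_d.+1) : {mpoly int[d.+1 + d.+1]} :=
  'X_(lshift d.+1 i).
Definition yvar (d : nat) (i : 'I_d.+1) : {mpoly int[d.+1 + d.+1]} :=
  'X_(rshift d.+1 i).

Definition in_x (d : nat) (u : {mpoly int[d.+1]}) : {mpoly int[d.+1 + d.+1]} :=
  comp_mpoly [tuple xvar i | i < d.+1] u.
Definition in_y (d : nat) (u : {mpoly int[d.+1]}) : {mpoly int[d.+1 + d.+1]} :=
  comp_mpoly [tuple yvar i | i < d.+1] u.

(* Lambda_p on P_S: x_i |-> x_i^p, y_i |-> x_i^p + (y_i - x_i)^p,
   i.e. Lambda_p(y_i - x_i) = (y_i - x_i)^p. *)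
Definition LambdaP (d p : nat) (u : {mpoly int[d.+1 + d.+1]}) :
    {mpoly int[d.+1 + d.+1]} :=
  comp_mpoly [tuple (match split i with
                     | inl j => xvar j ^+ p
                     | inr j => xvar j ^+ p + (yvar j - xvar j) ^+ p
                     end) | i < d.+1 + d.+1] u.

Definition phiP (d p : nat) (u : {mpoly int[d.+1 + d.+1]}) :
    {mpoly int[d.+1 + d.+1]} :=
  mdivz (LambdaP p u - u ^+ p) (p%:Z).

Definition LambdaS (d p : nat) (u : {mpoly int[d.+1]}) : {mpoly int[d.+1]} :=
  comp_mpoly [tuple ('X_i : {mpoly int[d.+1]}) ^+ p | i < d.+1] u.
Definition phiS (d p : nat) (u : {mpoly int[d.+1]}) : {mpoly int[d.+1]} :=
  mdivz (LambdaS p u - u ^+ p) (p%:Z).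

From HB Require Import structures.
From mathcomp Require Import all_boot all_order all_algebra.
From mathcomp Require Import mpoly.
From mathcomp Require Import ring.
Set Implicit Arguments.
Unset Strict Implicit.
Unset Printing Implicit Defensive.
Import GRing.Theory.
Local Open Scope ring_scope.

(* Specialize along the ring map psi : Z[x,y] -> S[t_0..t_d] sending y_j to
   the constant x_j, and x_j to 0 for j <= m, to x_j - t_j for j > m; thus
   y_j - x_j goes to x_j for j <= m and to t_j for j > m.  Since g lies in
   (x_0..x_m), psi(f(x)) = p psi(h(x)) and psi(f(y)) = f, so psi maps the ideal
   (f(x), f(y), p) into (f, p).  Apply psi to a relation witnessing that the
   class in H^{d+1} vanishes and take the coefficient of prod_{j>m} t_j^N: the
   Cech terms with j > m drop out, being multiples of t_j^(N+p), and what is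
   left witnesses that [phi_p(g)/(x_0...x_m)^p] vanishes.  Indeed the constant
   term psi0 of psi commutes with Lambda_p, hence with phi_p, because Lambda_p
   is a Frobenius lift (Lambda_p(u) = u^p mod p), which makes the division by
   p in phi_p exact; and psi0(f(y) - f(x)) = f - p h = g. *)

Lemma mpolyC_int k (z : int) : z%:MP = z%:~R :> {mpoly int[k]}.
Proof. by rewrite -[in LHS](intz z) rmorph_int. Qed.

Lemma eq_rmorph_mpoly k (A : nzRingType) (f1 f2 : {rmorphism {mpoly int[k]} -> A}) :
  (forall i, f1 'X_i = f2 'X_i) -> f1 =1 f2.
Proof.
move=> eqX; elim/mpolyind => [|c mo w _ _ IH]; first by rewrite !rmorph0.
rewrite -mul_mpolyC mpolyC_int mpolyXE_id !rmorphD !rmorphM !rmorph_int !rmorph_prod IH.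
by congr (_ * _ + _); apply: eq_bigr => i _; rewrite !rmorphXn eqX.
Qed.

Arguments eq_rmorph_mpoly {k A} f1 f2.

Lemma split_lshift m n (i : 'I_m) : split (lshift n i) = inl i.
Proof. exact: (unsplitK (inl i)). Qed.

Lemma split_rshift m n (i : 'I_n) : split (rshift m i) = inr i.
Proof. exact: (unsplitK (inr i)). Qed.

Lemma eq_rmorph_mpoly_xy d (A : nzRingType)
    (f1 f2 : {rmorphism {mpoly int[d.+1 + d.+1]} -> A}) :
  (forall j, f1 (xvar j) = f2 (xvar j)) -> (forall j, f1 (yvar j) = f2 (yvar j)) ->
  f1 =1 f2.
Proof.
by move=> eqx eqy; apply: eq_rmorph_mpoly => i; rewrite -(splitK i); case: split.
Qed.

Arguments eq_rmorph_mpoly_xy {d A} f1 f2.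

Lemma big_ord_if_leq (R : Type) (idx : R) (op : Monoid.com_law idx) d m
    (F : 'I_d.+1 -> R) : (m <= d)%N ->
  \big[op/idx]_(i < d.+1) (if (i <= m)%N then F i else idx)
    = \big[op/idx]_(k < m.+1) F (inord k).
Proof.
move=> lemd; rewrite (big_ord_widen d.+1 (fun k => F (inord k))) // [RHS]big_mkcond.
by apply: eq_bigr => i _; rewrite inord_val ltnS.
Qed.

Lemma mcoeffMX_eq0 n (R : comNzRingType) (A : {mpoly R[n]}) (mx k : 'X_{1..n}) i :
  (k i < mx i)%N -> (A * 'X_[mx])@_k = 0.
Proof.
move=> lt_k_mx; apply/memN_msupp_eq0; rewrite (perm_mem (msuppMX A mx)).
by apply/mapP => -[m' _ Ek]; move: lt_k_mx; rewrite Ek mnmDE ltnNge leq_addr.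
Qed.

Lemma mcoeff_lincombC n (R : comNzRingType) (a0 a1 a2 b : {mpoly R[n]}) (c e : R) mo :
  (a0 * (c%:MP * b))@_mo + (a1 * e%:MP)@_mo + (a2 * c%:MP)@_mo
  = a1@_mo * e + ((a0 * b)@_mo + a2@_mo) * c.
Proof. by rewrite mulrCA ![_ * _%:MP]mulrC !mcoeffCM; ring. Qed.

Definition multiple_of {A : pzRingType} (n : nat) (w : A) : Prop :=
  exists q, w = n%:R * q.

Lemma exprD_prime_multiple {A : comNzRingType} p (a b : A) : prime p ->
  multiple_of p ((a + b) ^+ p - a ^+ p - b ^+ p).
Proof.
case: p => [//|q] pp.
rewrite exprDn big_ord_recr big_ord_recl /= subnn subn0 bin0 binn expr0 mulr1 mul1r !mulr1n.
exists (\sum_(i < q) a ^+ (q.+1 - bump 0 i) * b ^+ bump 0 i *+ ('C(q.+1, bump 0 i) %/ q.+1)).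
have -> (x y z : A) : x + y + z - x - z = y by ring.
rewrite mulr_sumr; apply: eq_bigr => i _; rewrite mulr_natl -mulrnA divnK //.
by apply: prime_dvd_bin; rewrite //= /bump add1n ltnS ltn_ord.
Qed.

Section FrobeniusLift.
Variables (k p : nat) (L : {rmorphism {mpoly int[k]} -> {mpoly int[k]}}).
Hypothesis p_pr : prime p.

Let defect_free w := multiple_of p (L w - w ^+ p).

Lemma frobenius_lift_mpoly :
  (forall i, defect_free 'X_i) -> forall w, defect_free w.
Proof.
move=> dfX; have p_gt0 := prime_gt0 p_pr.
have df0 : defect_free 0 by exists 0; rewrite rmorph0 expr0n gtn_eqF // !mulr0 subr0.
have df1 : defect_free 1 by exists 0; rewrite rmorph1 expr1n subrr mulr0.
have dfD a b : defect_free a -> defect_free b -> defect_free (a + b).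
  move=> [qa Ea] [qb Eb]; have [z Ez] := exprD_prime_multiple a b p_pr.
  by exists (qa + qb - z); rewrite rmorphD !mulrDr mulrN -Ea -Eb -Ez; ring.
have dfM a b : defect_free a -> defect_free b -> defect_free (a * b).
  move=> [qa Ea] [qb Eb]; exists (qa * L b + a ^+ p * qb).
  by rewrite rmorphM exprMn mulrDr mulrA -Ea mulrCA -Eb; ring.
have dfN a : defect_free a -> defect_free (- a).
  move=> [qa Ea]; have [z Ez] := exprD_prime_multiple (-1 : {mpoly int[k]}) 1 p_pr.
  exists (- qa + z * a ^+ p); rewrite rmorphN exprNn mulrDr mulrN -Ea mulrA -Ez.
  by rewrite addNr expr0n gtn_eqF //= expr1n; ring.
have dfz (z : int) : defect_free z%:~R.
  have dfn n : defect_free n%:R by elim: n => // n IH; rewrite -addn1 natrD; apply: dfD.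
  by case: z => n; rewrite ?NegzE ?mulrNz; [apply: dfn | apply/dfN/dfn].
elim/mpolyind => // c mo w _ _ dfw; apply: dfD => //.
rewrite -mul_mpolyC mpolyC_int mpolyXE_id; apply: (dfM) => //.
apply: (big_ind defect_free df1 dfM) => i _.
by elim: (mo i) => [|e IH]; rewrite ?exprS //; apply: dfM.
Qed.

End FrobeniusLift.

Lemma mdivz_natK k p (w : {mpoly int[k]}) : (0 < p)%N ->
  mdivz (p%:R * w) p%:Z = w.
Proof.
move=> p_gt0; have pZ_neq0 : p%:Z != 0 by rewrite eqz_nat -lt0n.
have -> : p%:R * w = p%:Z *: w by rewrite -mul_mpolyC mpolyC_int.
rewrite /mdivz (perm_big _ (msuppZ w pZ_neq0)) [RHS]mpolyE.
by apply: eq_bigr => mo _; rewrite mcoeffZ mulKz // mul_mpolyC.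
Qed.

HB.instance Definition _ d :=
  GRing.RMorphism.copy (@in_x d) (comp_mpoly [tuple xvar i | i < d.+1]).
HB.instance Definition _ d :=
  GRing.RMorphism.copy (@in_y d) (comp_mpoly [tuple yvar i | i < d.+1]).
HB.instance Definition _ d p := GRing.RMorphism.copy (@LambdaP d p)
  (comp_mpoly [tuple (match split i with
                     | inl j => xvar j ^+ p
                     | inr j => xvar j ^+ p + (yvar j - xvar j) ^+ p
                     end) | i < d.+1 + d.+1]).
HB.instance Definition _ d p := GRing.RMorphism.copy (@LambdaS d p)
  (comp_mpoly [tuple ('X_i : {mpoly int[d.+1]}) ^+ p | i < d.+1]).

Section Lambda.
Variables d p : nat.
Implicit Types v w : {mpoly int[d.+1 + d.+1]}.

Lemma in_x_X i : in_x 'X_i = xvar i :> {mpoly int[d.+1 + d.+1]}.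
Proof. by rewrite /in_x comp_mpolyXU nth_mktuple. Qed.

Lemma in_y_X i : in_y 'X_i = yvar i :> {mpoly int[d.+1 + d.+1]}.
Proof. by rewrite /in_y comp_mpolyXU nth_mktuple. Qed.

Lemma LambdaS_X i : LambdaS p 'X_i = 'X_i ^+ p :> {mpoly int[d.+1]}.
Proof. by rewrite /LambdaS comp_mpolyXU nth_mktuple. Qed.

Lemma LambdaP_xvar (j : 'I_d.+1) : LambdaP p (xvar j) = xvar j ^+ p.
Proof. by rewrite /LambdaP {1}/xvar comp_mpolyXU nth_mktuple split_lshift. Qed.

Lemma LambdaP_yvar (j : 'I_d.+1) :
  LambdaP p (yvar j) = xvar j ^+ p + (yvar j - xvar j) ^+ p.
Proof. by rewrite /LambdaP {1}/yvar comp_mpolyXU nth_mktuple split_rshift. Qed.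

Lemma LambdaP_frobenius w : prime p -> multiple_of p (LambdaP p w - w ^+ p).
Proof.
move=> p_pr; apply: frobenius_lift_mpoly => // i; rewrite -(splitK i).
case: split => j /=.
- by exists 0; rewrite -/(xvar j) LambdaP_xvar subrr mulr0.
have [z Ez] := exprD_prime_multiple (xvar j) (yvar j - xvar j) p_pr.
exists (- z); rewrite -/(yvar j) LambdaP_yvar mulrN -Ez [xvar j + _]addrC subrK.
by ring.
Qed.

Lemma phiP_eq v w : prime p -> LambdaP p v - v ^+ p = p%:R * w -> phiP p v = w.
Proof. by move=> p_pr Ev; rewrite /phiP Ev mdivz_natK ?prime_gt0. Qed.

End Lambda.

Section Specialization.
Variables d m : nat.
Hypothesis m_lt_d : (m < d)%N.

Local Notation S := {mpoly int[d.+1]}.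
Local Notation PS := {mpoly int[d.+1 + d.+1]}.

Definition kill_low : S -> S :=
  comp_mpoly [tuple if (i <= m)%N then 0 else 'X_i | i < d.+1].
HB.instance Definition _ := GRing.RMorphism.on kill_low.

Definition psi_var (i : 'I_(d.+1 + d.+1)) : {mpoly S[d.+1]} :=
  match split i with
  | inl j => if (j <= m)%N then 0 else ('X_j)%:MP - 'X_j
  | inr j => ('X_j)%:MP
  end.

Definition psi : PS -> {mpoly S[d.+1]} := mmap intr psi_var.
HB.instance Definition _ := GRing.RMorphism.on psi.

Definition psi0 : PS -> S := mcoeff 0 \o psi.
HB.instance Definition _ := GRing.RMorphism.on psi0.

Lemma psi0E w : psi0 w = (psi w)@_0.
Proof. by []. Qed.

Lemma kill_low_X i : kill_low 'X_i = if (i <= m)%N then 0 else 'X_i.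
Proof. by rewrite /kill_low comp_mpolyXU nth_mktuple. Qed.

Lemma psi_xvar j : psi (xvar j) = if (j <= m)%N then 0 else ('X_j)%:MP - 'X_j.
Proof. by rewrite /psi /xvar mmapX mmap1U /psi_var split_lshift. Qed.

Lemma psi_yvar j : psi (yvar j) = ('X_j)%:MP.
Proof. by rewrite /psi /yvar mmapX mmap1U /psi_var split_rshift. Qed.

Lemma psi_diff j : psi (yvar j - xvar j) = if (j <= m)%N then ('X_j)%:MP else 'X_j.
Proof.
by rewrite rmorphB /= psi_xvar psi_yvar; case: ifP; rewrite ?subr0 // opprB addrC subrK.
Qed.

Lemma psi0_xvar j : psi0 (xvar j) = if (j <= m)%N then 0 else 'X_j.
Proof.
rewrite psi0E psi_xvar; case: ifP => _; first exact: mcoeff0.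
by rewrite mcoeffB mcoeffC eqxx mulr1 mcoeffX mnm1_eq0 subr0.
Qed.

Lemma psi_in_y u : psi (in_y u) = u%:MP.
Proof.
apply: (eq_rmorph_mpoly (psi \o @in_y d) (@mpolyC d.+1 S)) => i.
by rewrite /= in_y_X psi_yvar.
Qed.

Lemma psi0_in_y u : psi0 (in_y u) = u.
Proof. by rewrite psi0E psi_in_y mcoeffC eqxx mulr1. Qed.

Lemma psi0_in_x u : psi0 (in_x u) = kill_low u.
Proof.
apply: (eq_rmorph_mpoly (psi0 \o @in_x d) kill_low) => i.
by rewrite /= in_x_X psi0_xvar kill_low_X.
Qed.

Lemma psi0_LambdaP p w : (0 < p)%N -> psi0 (LambdaP p w) = LambdaS p (psi0 w).
Proof.
move=> p_gt0.
apply: (eq_rmorph_mpoly_xy (psi0 \o LambdaP p) (LambdaS p \o psi0)) => j /=.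
  rewrite LambdaP_xvar rmorphXn /= psi0_xvar.
  by case: ifP; rewrite ?rmorph0 ?expr0n ?gtn_eqF ?LambdaS_X.
rewrite LambdaP_yvar rmorphD !rmorphXn rmorphB /= psi0_xvar psi0E psi_yvar mcoeffC eqxx mulr1.
by case: ifP; rewrite ?LambdaS_X ?subr0 ?subrr ?expr0n ?gtn_eqF ?add0r ?addr0.
Qed.

Lemma psi0_phiP p v : prime p -> psi0 (phiP p v) = phiS p (psi0 v).
Proof.
move=> p_pr; have [w Ew] := LambdaP_frobenius v p_pr.
rewrite (phiP_eq p_pr Ew) /phiS -psi0_LambdaP ?prime_gt0 // -rmorphXn -rmorphB Ew.
by rewrite rmorphM rmorph_nat mdivz_natK ?prime_gt0.
Qed.

Definition mhigh : 'X_{1..d.+1} :=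
  [multinom (if (i <= m)%N then 0%N else 1%N) | i < d.+1].

Lemma psi_prod_diff N :
  psi ((\prod_(i < d.+1) (yvar i - xvar i)) ^+ N)
  = ((\prod_(k < m.+1) 'X_(inord k)) ^+ N)%:MP * 'X_[(mhigh *+ N)%MM].
Proof.
rewrite rmorphXn rmorph_prod /=.
have -> : \prod_(i < d.+1) psi (yvar i - xvar i)
    = (\prod_(i < d.+1) (if (i <= m)%N then ('X_i : S) else 1))%:MP * 'X_[mhigh].
  rewrite rmorph_prod mpolyXE_id -big_split; apply: eq_bigr => i _ /=.
  by rewrite psi_diff mnmE; case: ifP; rewrite ?rmorph1 ?mulr1 ?mul1r.
by rewrite exprMn -rmorphXn big_ord_if_leq 1?ltnW // mpolyXn.
Qed.

Lemma mcoeff_psi_prod_diffM N u :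
  (psi ((\prod_(i < d.+1) (yvar i - xvar i)) ^+ N * u))@_(mhigh *+ N)%MM
  = (\prod_(k < m.+1) 'X_(inord k)) ^+ N * psi0 u.
Proof.
rewrite rmorphM /= psi_prod_diff -mulrA mcoeffCM [_ * psi u]mulrC psi0E.
by have := mcoeffMX (psi u) (mhigh *+ N)%MM 0%MM; rewrite addm0 => ->.
Qed.

Lemma mcoeff_psi_sum_diff N e (c : 'I_d.+1 -> PS) : (0 < e)%N ->
  (psi (\sum_(i < d.+1) c i * (yvar i - xvar i) ^+ (N + e)))@_(mhigh *+ N)%MM
  = \sum_(k < m.+1) (psi (c (inord k)))@_(mhigh *+ N)%MM * 'X_(inord k) ^+ (N + e).
Proof.
move=> e_gt0; rewrite rmorph_sum raddf_sum.
pose F i := (psi (c i))@_(mhigh *+ N)%MM * 'X_i ^+ (N + e).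
rewrite -(big_ord_if_leq _ F) 1?ltnW //.
apply: eq_bigr => i _; rewrite rmorphM rmorphXn /= psi_diff; case: ifP => i_le_m.
  by rewrite -rmorphXn mulrC mcoeffCM mulrC.
rewrite mpolyXn (mcoeffMX_eq0 _ (i := i)) // !mulmnE mnmE i_le_m mnm1E eqxx !mul1n.
by rewrite -[X in (X < _)%N]addn0 ltn_add2l.
Qed.

Lemma mcoeff_psi_cech N e u (c : 'I_d.+1 -> PS) : (0 < e)%N ->
  (psi ((\prod_(i < d.+1) (yvar i - xvar i)) ^+ N * u
        - \sum_(i < d.+1) c i * (yvar i - xvar i) ^+ (N + e)))@_(mhigh *+ N)%MM
  = (\prod_(k < m.+1) 'X_(inord k)) ^+ N * psi0 u
    - \sum_(k < m.+1) (psi (c (inord k)))@_(mhigh *+ N)%MM * 'X_(inord k) ^+ (N + e).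
Proof.
move=> e_gt0; rewrite -mcoeff_psi_prod_diffM -mcoeff_psi_sum_diff //.
by rewrite rmorphB mcoeffB.
Qed.

Section IdealTransfer.
Variables (p : nat) (g h : S).
Hypothesis g_low :
  exists c : 'I_m.+1 -> S, g = \sum_(i < m.+1) c i * 'X_(inord i : 'I_d.+1).
Hypothesis h_high :
  forall mo, mo \in msupp h -> forall i : 'I_d.+1, (i <= m)%N -> mo i = 0%N.
Let f := g + (p%:Z)%:MP * h.

Lemma rmorph_low_ideal_eq0 (A : nzRingType) (F : {rmorphism S -> A}) :
  (forall j : 'I_d.+1, (j <= m)%N -> F 'X_j = 0) -> F g = 0.
Proof.
have [c ->] := g_low; move=> FX0; rewrite rmorph_sum big1 // => i _.
have i_lt : (i < d.+1)%N by rewrite (leq_trans (ltn_ord i)) // ltnS ltnW.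
by rewrite rmorphM FX0 ?mulr0 // inordK // -ltnS ltn_ord.
Qed.

Lemma kill_low_high : kill_low h = h.
Proof.
rewrite /kill_low comp_mpolyEX [RHS]mpolyE; apply: eq_big_seq => mo /h_high mo_high.
congr (_ *: _); rewrite comp_mpolyX mpolyXE_id; apply: eq_bigr => i _.
by rewrite tnth_mktuple; case: ifP => // /mo_high ->; rewrite !expr0.
Qed.

Lemma psi0_f_diff : psi0 (in_y f - in_x f) = g.
Proof.
rewrite rmorphB /= psi0_in_y psi0_in_x /f rmorphD rmorphM /= kill_low_high.
rewrite (rmorph_low_ideal_eq0 (F := kill_low)) => [|j j_le_m].
  by rewrite mpolyC_int rmorph_int add0r addrK.
by rewrite /= kill_low_X j_le_m.
Qed.

Lemma psi_in_x_f : psi (in_x f) = (p%:Z)%:~R * psi (in_x h).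
Proof.
have psi_g : psi (in_x g) = 0.
  apply: (rmorph_low_ideal_eq0 (F := psi \o @in_x d)) => j j_le_m.
  by rewrite /= in_x_X psi_xvar j_le_m.
by rewrite /f mpolyC_int !rmorphD !rmorphM /= rmorph_int /= rmorph_int psi_g add0r.
Qed.

Lemma mcoeff_psi_in_ideal mo w :
  in_ideal [ffun j : 'I_3 => if val j == 0%N then in_x f
                            else if val j == 1%N then in_y f
                            else (p%:Z)%:MP] w ->
  in_ideal [ffun j : 'I_2 => if val j == 0%N then f else (p%:Z)%:MP] (psi w)@_mo.
Proof.
case=> r ->; rewrite rmorph_sum raddf_sum !big_ord_recr big_ord0 /= !ffunE /= add0r.
set r0 := r _; set r1 := r _; set r2 := r _.
exists (fun j : 'I_2 => if val j == 0%N then (psi r1)@_mo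
                       else (psi r0 * psi (in_x h))@_mo + (psi r2)@_mo).
rewrite !big_ord_recr big_ord0 /= !ffunE /= add0r !rmorphM /= psi_in_x_f psi_in_y.
have pC : (p%:Z)%:~R = ((p%:Z)%:MP : S)%:MP :> {mpoly S[d.+1]}.
  by rewrite mpolyC_int (rmorph_int (@mpolyC d.+1 S)).
rewrite mpolyC_int (rmorph_int psi) pC.
exact: mcoeff_lincombC.
Qed.

End IdealTransfer.

End Specialization.

Theorem lemma8p3 (d m p : nat) (g h : {mpoly int[d.+1]}) :
  prime p ->
  (m < d)%N ->
  (* g lies in (x_0, ..., x_m) S *)
  (exists c : 'I_m.+1 -> {mpoly int[d.+1]},
     g = \sum_(i < m.+1) c i * 'X_(inord i : 'I_d.+1))
  ->
  (* h is a polynomial in x_{m+1}, ..., x_d only *)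
  (forall mo, mo \in msupp h -> forall i : 'I_d.+1, (i <= m)%N -> mo i = 0%N) ->
  let f := g + (p%:Z)%:MP * h in
  (* the class [phi_p(g)/(x_0...x_m)^p] in H^{m+1}_{(x_0..x_m)}(S/(f,p)) is nonzero *)
  ~ top_cech_class_zero
      [ffun j : 'I_2 => if val j == 0%N then f else (p%:Z)%:MP]
      (fun i : 'I_m.+1 => ('X_(inord i : 'I_d.+1)
                            : {mpoly int[d.+1]}))
      (phiS p g) p ->
  (* then the class [phi_p(f(y)-f(x)) / prod (y_i-x_i)^p] in
     H^{d+1}_{Delta_R}(Z[x,y]/(f(x), f(y), p)) is nonzero *)
  ~ top_cech_class_zero
      [ffun j : 'I_3 => if val j == 0%N then in_x f
                        else if val j == 1%N then in_y f
                        else (p%:Z)%:MP]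
      (fun i : 'I_d.+1 => yvar i - xvar i)
      (phiP p (in_y f - in_x f)) p.
Proof.
move=> p_pr m_lt_d g_low h_high f nz_g [N [c ideal_rel]]; apply: nz_g.
exists N, (fun k => (psi m (c (inord k)))@_(mhigh d m *+ N)%MM).
have psi0_phi : psi0 m (phiP p (in_y f - in_x f)) = phiS p g.
  by rewrite psi0_phiP // psi0_f_diff.
have rel_S := mcoeff_psi_in_ideal m_lt_d g_low (mhigh d m *+ N)%MM ideal_rel.
by rewrite (mcoeff_psi_cech m_lt_d) ?prime_gt0 // psi0_phi in rel_S.
Qed.
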